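(* Let $A, B, C, D \in \mathrm{SL}(2,\mathbb{R})$ and for integers $k, \ell$ let $M_{k,\ell} = D^\ell C B^k A$. Suppose $\mathrm{Tr}(B) = \mathrm{Tr}(D)$. Then for all integers $k \ge 3$, $$\mathrm{Tr}(M_{k,k}) = (\mathrm{Tr}(B)^2 - 1)\big(\mathrm{Tr}(M_{k-1,k-1}) - \mathrm{Tr}(M_{k-2,k-2})\big) + \mathrm{Tr}(M_{k-3,k-3}).$$ *)

From mathcomp Require Import all_boot all_order all_algebra.
From mathcomp Require Import reals.
Set Implicit Arguments. Unset Strict Implicit. Unset Printing Implicit Defensive.
Import GRing.Theory Num.Theory.
Local Open Scope ring_scope.

Definition SL2 (R : realType) (M : 'M[R]_2) : Prop := \det M = 1.

Definition Mkl (R : realType) (A B C D : 'M[R]_2) (k l : nat) : 'M[R]_2 :=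
  D ^+ l *m C *m B ^+ k *m A.

(* By Cayley-Hamilton, X ^+ 2 = t X - 1 for X in SL(2) of trace t. Then
   M_{k,k} = S_k(C) A with S_k(y) = D^k y B^k, and the linear map y |-> D y B
   is annihilated by z^3 - (t^2 - 1) z^2 + (t^2 - 1) z - 1
   = (z - 1)(z^2 - (t^2 - 2) z + 1), whose roots are the products
   lambda^2, 1, lambda^-2 of eigenvalues of D and B. So S_k(C) satisfies the
   recurrence, and so does its image under the linear form y |-> tr (y A). *)

From mathcomp Require Import all_boot all_order all_algebra.
From mathcomp Require Import reals.
Set Implicit Arguments. Unset Strict Implicit. Unset Printing Implicit Defensive.
Import GRing.Theory Num.Theory.
Local Open Scope ring_scope.

Lemma char_poly_mx2 (R : comNzRingType) (A : 'M[R]_2) :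
  char_poly A = 'X^2 - \tr A *: 'X + (\det A)%:P.
Proof.
apply/polyP=> i; rewrite coefD coefB coefZ coefXn coefX coefC.
case: i => [|[|[|i]]]; rewrite /= ?mulr0 ?mulr1 ?subr0 ?sub0r ?addr0 ?add0r.
- by rewrite char_poly_det sqrrN expr1n mul1r.
- exact: (char_poly_trace A).
- by rewrite -(monicP (char_poly_monic A)) lead_coefE size_char_poly.
- by rewrite nth_default ?size_char_poly.
Qed.

Lemma Cayley_Hamilton_mx2 (R : comNzRingType) (A : 'M[R]_2) : A ^+ 2 = \tr A *: A - (\det A)%:M.
Proof.
have := Cayley_Hamilton A.
rewrite char_poly_mx2 rmorphD rmorphB /= horner_mxZ rmorphXn /= horner_mx_X horner_mx_C.
by move/eqP; rewrite addr_eq0 subr_eq => /eqP ->; rewrite addrC.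
Qed.

Section Sandwich.

Variables (R : comNzRingType) (V : algType R) (d b : V).

Definition sandwich n y := d ^+ n * y * b ^+ n.

Lemma sandwich1 y : sandwich 1 y = d * y * b.
Proof. by rewrite /sandwich !expr1. Qed.

Lemma sandwichD m n y : sandwich (m + n) y = sandwich m (sandwich n y).
Proof. by rewrite /sandwich exprD (addnC m) exprD !mulrA. Qed.

Variable t : R.
Hypotheses (d_sqr : d ^+ 2 = t *: d - 1) (b_sqr : b ^+ 2 = t *: b - 1).

Lemma sandwich2 y : sandwich 2 y = t ^+ 2 *: sandwich 1 y - t *: (d * y + y * b) + y.
Proof.
rewrite /sandwich d_sqr b_sqr !expr1.
rewrite mulrBl mul1r !mulrBr !mulr1 -!scalerAl -!scalerAr mulrBl -scalerAl.
rewrite scalerBr scalerA -expr2 scalerDr opprB opprD !addrA addrAC; congr (_ + _).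
exact: addrAC.
Qed.

Lemma sandwich3 x : sandwich 3 x = (t ^+ 2 - 1) *: (sandwich 2 x - sandwich 1 x) + x.
Proof.
(* Expand [sandwich 2 (sandwich 1 x)], then eliminate [t *: (d * x + x * b)]
   using [sandwich2] at [x]. *)
have outer_sum : d * sandwich 1 x + sandwich 1 x * b =
    t *: sandwich 1 x - x * b + (t *: sandwich 1 x - d * x).
  rewrite sandwich1 !mulrA -[d * d]expr2 -[_ * b * b]mulrA -[b * b]expr2 d_sqr b_sqr.
  by rewrite !mulrBl !mulrBr mul1r mulr1 -!scalerAl -!scalerAr.
have t_sum : t *: (d * x + x * b) = t ^+ 2 *: sandwich 1 x - sandwich 2 x + x.
  by rewrite sandwich2 opprD addrA subrK subKr.
rewrite (sandwichD 2 1) sandwich2 -(sandwichD 1 1) outer_sum.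
rewrite addrACA -opprD [x * b + _]addrC.
rewrite scalerBr t_sum opprB scalerDr scalerA -expr2 scalerBl scale1r scalerBr.
set c := t ^+ 2 *: sandwich 1 x; set u := sandwich 2 x.
rewrite opprB opprD [c - u + x + _]addrA [c - u + x - c]addrAC [c - u - c]addrAC.
rewrite subrr sub0r -!addrA; congr (_ + _); rewrite [LHS]addrA [RHS]addrA.
exact: addrC.
Qed.

Lemma sandwich_recurrence x k :
  sandwich k.+3 x =
    (t ^+ 2 - 1) *: (sandwich k.+2 x - sandwich k.+1 x) + sandwich k x.
Proof.
rewrite -[k.+3]/(3 + k)%N -[k.+2]/(2 + k)%N -[k.+1]/(1 + k)%N !sandwichD.
exact: sandwich3.
Qed.

End Sandwich.

Theorem lemma2p3 (R : realType) (A B C D : 'M[R]_2)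
  (hA : SL2 A) (hB : SL2 B) (hC : SL2 C) (hD : SL2 D)
  (hBD : \tr B = \tr D) (k : nat) (hk : (3 <= k)%N) :
  \tr (Mkl A B C D k k) =
    (\tr B ^+ 2 - 1) * (\tr (Mkl A B C D k.-1 k.-1) - \tr (Mkl A B C D k.-2 k.-2))
    + \tr (Mkl A B C D (k - 3) (k - 3)).
Proof.
case: k hk => [|[|[|k]]] // _.
have D_sqr : D ^+ 2 = \tr B *: D - 1 by rewrite Cayley_Hamilton_mx2 hD hBD.
have B_sqr : B ^+ 2 = \tr B *: B - 1 by rewrite Cayley_Hamilton_mx2 hB.
have Mkl_sandwich l : Mkl A B C D l l = sandwich D B l C * A by rewrite /Mkl !mulmxE.
rewrite !Mkl_sandwich !subSS subn0 /= (sandwich_recurrence D_sqr B_sqr).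
by rewrite mulrDl -scalerAl mulrBl mxtraceD mxtraceZ raddfB.
Qed.
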